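(* Let $T>0$ and $\mathbf{u}\in C([0,T];X)$. Then for every $t\in[0,T]$ the map $(\mathbf{y},\mathbf{x})\mapsto\gamma(\mathbf{u})(\mathbf{y},\mathbf{x},t)$ on $\Omega\times\Omega$ is measurable, and for almost all $(\mathbf{y},\mathbf{x})$ the map $t\mapsto\gamma(\mathbf{u})(\mathbf{y},\mathbf{x},t)$ is continuous on $[0,T]$. Moreover, there is a constant $C$, independent of the vector fields, such that for all $\mathbf{u},\mathbf{w}\in C([0,T];X)$, almost all $(\mathbf{y},\mathbf{x})\in\Omega\times\Omega$ with $|\mathbf{y}-\mathbf{x}|<\epsilon$, and all $t\in[0,T]$, $$|\gamma(\mathbf{u})(\mathbf{y},\mathbf{x},t)-\gamma(\mathbf{w})(\mathbf{y},\mathbf{x},t)|\le \|\mathbf{u}-\mathbf{w}\|_{C([0,T];X)}\,\frac{C}{|\mathbf{y}-\mathbf{x}|}.$$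
   Context: Let $d\in\{2,3\}$, $\Omega\subset\mathbb{R}^d$ a bounded domain, $\epsilon>0$ a horizon, $L>0$ a length and $\overline{\mu}>0$. For a time-dependent displacement $\mathbf{u}(t,\cdot):\Omega\to\mathbb{R}^d$ and $\mathbf{y}\ne\mathbf{x}$, with $\mathbf{e}=(\mathbf{y}-\mathbf{x})/|\mathbf{y}-\mathbf{x}|$, the strain is $S(\mathbf{y},\mathbf{x},\mathbf{u}(t))=(\mathbf{u}(t,\mathbf{y})-\mathbf{u}(t,\mathbf{x}))\cdot\mathbf{e}/|\mathbf{y}-\mathbf{x}|$, the memory strain is $S^*(t,\mathbf{y},\mathbf{x},\mathbf{u})=\max_{0\le\tau\le t}S(\mathbf{y},\mathbf{x},\mathbf{u}(\tau))$ and $r^*=\sqrt{|\mathbf{y}-\mathbf{x}|/L}\,S^*(t,\mathbf{y},\mathbf{x},\mathbf{u})$. The failure envelope is the derivative $g'$ of a convex–concave potential $g$ with parameters $0<r^L\le r^C<r^F$: $g'(r)=\overline{\mu}r$ for $r\le r^L$, $g'$ becomes nonlinear beyond $r^L$ (strain hardening between $r^L$ and $r^C$) and decreases to $0$ at $r^F$, with $g'(r)=0$ for $r\ge r^F$ (e.g. the bilinear law $g'(r)=\overline{\mu}r$ for $r<r^C$, $g'(r)=\overline{\mu}r^C\frac{r^F-r}{r^F-r^C}$ for $r^C\le r\le r^F$, $0$ for $r>r^F$). The two-point phase field is $\gamma(\mathbf{u})(\mathbf{y},\mathbf{x},t)=\frac{g'(r^* )}{\overline{\mu}\,r^*}\in[0,1]$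 (equal to $1$ when $r^*\le r^L$). Let $\mathcal{U}=\{\mathbb{Q}\mathbf{x}+\mathbf{c}:\ \mathbb{Q}^T=-\mathbb{Q}\}$ be the rigid motions and $X$ the subspace of $L^\infty(\Omega;\mathbb{R}^d)$ of fields $L^2$-orthogonal to $\mathcal{U}$; $C([0,T];X)$ has norm $\sup_{0\le t\le T}\|\mathbf{u}(t)\|_{L^\infty}$. *)

From HB Require Import structures.
From mathcomp Require Import all_boot all_order all_algebra.
From mathcomp Require Import all_classical all_reals all_analysis.
Set Implicit Arguments. Unset Strict Implicit. Unset Printing Implicit Defensive.
Import Order.TTheory GRing.Theory Num.Theory.
Import numFieldNormedType.Exports.
Local Open Scope classical_set_scope.
Local Open Scope ring_scope.

Section Defs.
Variable R : realType.

(* Points of R^n are n-tuples of reals (carrying the Borel product sigma-algebra). *)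
Local Notation pt n := (n.-tuple R).

Definition vsub n (a b : pt n) : pt n := [tuple tnth a i - tnth b i | i < n].
Definition vadd n (a b : pt n) : pt n := [tuple tnth a i + tnth b i | i < n].
Definition vscale n (c : R) (a : pt n) : pt n := [tuple c * tnth a i | i < n].
Definition dot n (a b : pt n) : R := \sum_(i < n) tnth a i * tnth b i.
Definition enorm n (a : pt n) : R := Num.sqrt (dot a a).

Definition box n (a b : pt n) : set (pt n) :=
  [set y | forall i : 'I_n, tnth a i <= tnth y i <= tnth b i].
Definition vol n (a b : pt n) : R := \prod_(i < n) Num.max 0 (tnth b i - tnth a i).

Definition leb_outer n (A : set (pt n)) : \bar R :=
  ereal_inf [set (\sum_(k <oo) ((vol (ab.1 k) (ab.2 k))%:E))%E |
             ab in [set ab : (nat -> pt n) * (nat -> pt n) |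
                    A `<=` \bigcup_k box (ab.1 k) (ab.2 k)]].

Definition null n (A : set (pt n)) : Prop := leb_outer A = 0%E.

(* Lebesgue-null subsets of R^d x R^d = R^(2d) *)
Definition null2 n (N : set (pt n * pt n)) : Prop :=
  null ((fun p : pt n * pt n => cat_tuple p.1 p.2) @` N).

Definition ae2 n (A : set (pt n * pt n)) (P : pt n -> pt n -> Prop) : Prop :=
  exists N, null2 N /\ forall y x, A (y, x) -> ~ N (y, x) -> P y x.

(* bounded domain: nonempty, open, connected, bounded (Euclidean topology) *)
Definition eopen n (A : set (pt n)) : Prop :=
  forall x, A x -> exists r : R, 0 < r /\ [set y | enorm (vsub y x) < r] `<=` A.
Definition bounded_domain n (Om : set (pt n)) : Prop :=
  [/\ Om !=set0, eopen Om,
      (forall A B : set (pt n), eopen A -> eopen B -> Om `<=` A `|` B ->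
         Om `&` A `&` B = set0 -> Om `&` A = set0 \/ Om `&` B = set0)
    & exists M : R, forall x, Om x -> enorm x <= M].

Definition linf n (Om : set (pt n)) (f : pt n -> pt n) : \bar R :=
  ereal_inf [set M%:E | M in [set M : R | null (Om `&` [set x | M < enorm (f x)])]].

Definition rigid n (Q : 'M[R]_n) (c : pt n) (x : pt n) : pt n :=
  [tuple (\sum_(j < n) Q i j * tnth x j) + tnth c i | i < n].

(* v belongs to X: measurable, essentially bounded, L^2-orthogonal to rigid motions *)
Definition inX n (Om : set (pt n)) (v : pt n -> pt n) : Prop :=
  [/\ measurable_fun Om v,
      (linf Om v < +oo)%E
    & forall (Q : 'M[R]_n) (c : pt n), Q^T = - Q ->
        (\int[@leb_outer n]_(x in Om) (dot (v x) (rigid Q c x))%:E = 0)%E].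

(* u in C([0,T]; X), u given as a map from times to (representatives of) fields *)
Definition inCX n (Om : set (pt n)) (T : R) (u : R -> pt n -> pt n) : Prop :=
  (forall t, 0 <= t <= T -> inX Om (u t)) /\
  (forall t, 0 <= t <= T -> forall e : R, 0 < e -> exists del : R, 0 < del /\
     forall s, 0 <= s <= T -> `|s - t| < del ->
       (linf Om (fun x => vsub (u s x) (u t x)) <= e%:E)%E).

(* norm of C([0,T];X) applied to u - w *)
Definition normCX n (Om : set (pt n)) (T : R) (u w : R -> pt n -> pt n) : \bar R :=
  ereal_sup [set linf Om (fun x => vsub (u t x) (w t x)) | t in `[0, T]%classic].

Definition strain n (y x : pt n) (v : pt n -> pt n) : R :=
  dot (vsub (v y) (v x)) (vscale (enorm (vsub y x))^-1 (vsub y x)) / enorm (vsub y x).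

(* memory strain S^*(t,y,x,u): maximum over tau in [0,t], it is
   taken over the rational times tau in [0,t] (a countable dense set). *)
Definition mstrain n (u : R -> pt n -> pt n) (t : R) (y x : pt n) : \bar R :=
  ereal_sup [set (strain y x (u (ratr q : R)))%:E |
             q in [set q : rat | 0 <= (ratr q : R) <= t]].

Definition rstar n (Lc : R) (u : R -> pt n -> pt n) (t : R) (y x : pt n) : \bar R :=
  ((Num.sqrt (enorm (vsub y x) / Lc))%:E * mstrain u t y x)%E.

(* failure envelope g' (derivative of the convex-concave potential g) *)
Definition envelope (mu rL rC rF : R) (gp : R -> R) : Prop :=
  (0 < rL /\ rL <= rC /\ rC < rF) /\
  (forall r, r <= rL -> gp r = mu * r) /\
  (forall r, rF <= r -> gp r = 0) /\
  (forall r, rL <= r -> 0 <= gp r /\ gp r <= mu * r) /\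
  (forall r s, r <= s -> s <= rC -> gp r <= gp s) /\
  (forall r s, rC <= r -> r <= s -> gp s <= gp r) /\
  (exists K : R, forall r s, `|gp r - gp s| <= K * `|r - s|).

Definition phase (mu rL : R) (gp : R -> R) (r : \bar R) : R :=
  match r with
  | EFin r => if r <= rL then 1 else gp r / (mu * r)
  | +oo%E => 0
  | -oo%E => 1
  end.

Definition gamma n (Lc mu rL : R) (gp : R -> R) (u : R -> pt n -> pt n)
  (y x : pt n) (t : R) : R := phase mu rL gp (rstar Lc u t y x).

End Defs.
Notation pt R n := (n.-tuple R).

(* gamma(u)(y,x,t) = phi(r_star) where phi(r) = g'(r) / (mu r) for r > rL and phi = 1
   below; as g' is Lipschitz with 0 <= g'(r) <= mu r, phi is Lipschitz.  The memory
   strain is a supremum over rational times, hence a countable supremum of measurable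
   strains.  For the a.e. statements, |v(z)| <= ||v||_oo holds for the countably many
   fields v = u(q) - w(q) (resp. u(q) - u(s)), q, s rational, outside a single null set
   N.  For y, x outside N the strains of u and w differ by at most 2 ||v||_oo / |y - x|
   at every rational time, hence so do their suprema over times, and phi transfers this
   bound, multiplied by sqrt(|y - x| / L) <= sqrt(eps / L), to gamma.  Continuity in t
   follows in the same way from the continuity of u in L^oo. *)

From HB Require Import structures.
From mathcomp Require Import all_boot all_order all_algebra.
From mathcomp Require Import all_classical all_reals all_analysis.
From mathcomp Require Import ring lra measurable_realfun.
Set Implicit Arguments. Unset Strict Implicit. Unset Printing Implicit Defensive.
Import Order.TTheory GRing.Theory Num.Theory.
Import numFieldNormedType.Exports.
Local Open Scope classical_set_scope.
Local Open Scope ring_scope.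

Section Euclid.
Variables (R : realType) (n : nat).
Local Notation pt := (n.-tuple R).
Implicit Types a b c : pt.

Lemma tnth_vsub a b i : tnth (vsub a b) i = tnth a i - tnth b i.
Proof. by rewrite tnth_mktuple. Qed.

Lemma tnth_vadd a b i : tnth (vadd a b) i = tnth a i + tnth b i.
Proof. by rewrite tnth_mktuple. Qed.

Lemma tnth_vscale k a i : tnth (vscale k a) i = k * tnth a i.
Proof. by rewrite tnth_mktuple. Qed.

Lemma dotC a b : dot a b = dot b a.
Proof. by apply: eq_bigr => i _; rewrite mulrC. Qed.

Lemma dotBl a b c : dot (vsub a b) c = dot a c - dot b c.
Proof. by rewrite /dot -sumrB; apply: eq_bigr => i _; rewrite tnth_vsub mulrBl. Qed.

Lemma dotDl a b c : dot (vadd a b) c = dot a c + dot b c.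
Proof. by rewrite /dot -big_split; apply: eq_bigr => i _; rewrite tnth_vadd mulrDl. Qed.

Lemma dotZr k a b : dot a (vscale k b) = k * dot a b.
Proof. by rewrite /dot mulr_sumr; apply: eq_bigr => i _; rewrite tnth_vscale mulrCA. Qed.

Lemma dotZl k a b : dot (vscale k a) b = k * dot a b.
Proof. by rewrite dotC dotZr dotC. Qed.

Lemma dotpp_ge0 a : 0 <= dot a a.
Proof. by apply: sumr_ge0 => i _; rewrite -expr2 sqr_ge0. Qed.

Lemma dotpp_eq0 a : dot a a = 0 -> forall i, tnth a i = 0.
Proof.
move=> /eqP; rewrite psumr_eq0 => [/allP a0 i|i _]; last by rewrite -expr2 sqr_ge0.
by apply/eqP; rewrite -sqrf_eq0 expr2; apply: a0 (mem_index_enum _).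
Qed.

Lemma enorm_ge0 a : 0 <= enorm a.
Proof. exact: sqrtr_ge0. Qed.

Lemma enorm_sqr a : enorm a ^+ 2 = dot a a.
Proof. by rewrite sqr_sqrtr // dotpp_ge0. Qed.

Lemma enormN a : enorm (vscale (-1) a) = enorm a.
Proof. by rewrite /enorm dotZl dotZr !mulN1r opprK. Qed.

Lemma enorm_eq0_dot a b : enorm a = 0 -> dot a b = 0.
Proof.
move=> a0; have aa0 : dot a a = 0 by rewrite -enorm_sqr a0 expr0n.
by rewrite /dot big1 // => i _; rewrite (dotpp_eq0 aa0) mul0r.
Qed.

Lemma ler_dot a b : dot a b <= enorm a * enorm b.
Proof.
set A := enorm a; set B := enorm b.
have [A0|Ap] := eqVneq A 0; first by rewrite enorm_eq0_dot // A0 mul0r.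
have [B0|Bp] := eqVneq B 0; first by rewrite dotC enorm_eq0_dot // B0 mulr0.
have {Ap}Ap : 0 < A by rewrite lt_def Ap enorm_ge0.
have {Bp}Bp : 0 < B by rewrite lt_def Bp enorm_ge0.
(* [0 <= |B a - A b|^2 = 2 A B (A B - a.b)] *)
have := dotpp_ge0 (vsub (vscale B a) (vscale A b)).
rewrite !dotBl !(dotC _ (vsub _ _)) !dotBl !dotZl !dotZr -!enorm_sqr (dotC b a) -/A -/B.
move=> sqr_ge0; have : 0 <= 2 * A * B * (A * B - dot a b) by nra.
by rewrite pmulr_rge0 ?subr_ge0 // !mulr_gt0.
Qed.

Lemma ler_norm_dot a b : `|dot a b| <= enorm a * enorm b.
Proof.
rewrite ler_norml ler_dot andbT lerNl -mulN1r -dotZl -(enormN a).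
exact: ler_dot.
Qed.

Lemma enorm_vaddle a b : enorm (vadd a b) <= enorm a + enorm b.
Proof.
rewrite -(@ler_pXn2r _ 2) ?nnegrE ?addr_ge0 ?enorm_ge0 //.
rewrite enorm_sqr dotDl !(dotC _ (vadd _ _)) !dotDl (dotC b a) -!enorm_sqr.
have := ler_dot a b; lra.
Qed.

Lemma enorm_vsubC a b : enorm (vsub a b) = enorm (vsub b a).
Proof.
by rewrite /enorm /dot; congr Num.sqrt; apply: eq_bigr => i _; rewrite !tnth_vsub; ring.
Qed.

Lemma enorm_vsub_triangle a b c :
  enorm (vsub a c) <= enorm (vsub a b) + enorm (vsub b c).
Proof.
have -> : vsub a c = vadd (vsub a b) (vsub b c).
  by apply: eq_from_tnth => i; rewrite tnth_vadd !tnth_vsub subrKA.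
exact: enorm_vaddle.
Qed.

End Euclid.

Lemma nneseries_pickle (R : realType) (v : nat -> nat -> \bar R) :
  (forall k i, (0 <= v k i)%E) ->
  (\sum_(j <oo) (if @pickle_inv (nat * nat)%type j is Some p then v p.1 p.2 else 0)
   = \sum_(k <oo) \sum_(i <oo) v k i)%E.
Proof.
move=> v0.
pose G j := if @pickle_inv (nat * nat)%type j is Some p then v p.1 p.2 else 0%E.
change (\sum_(j <oo) G j = \sum_(k <oo) \sum_(i <oo) v k i)%E.
have G0 j : (0 <= G j)%E by rewrite /G; case: pickle_inv.
rewrite nneseries_esumT // nneseries_esumT; last first.
  by move=> k; apply: nneseries_ge0 => i _ _.
transitivity (\esum_(j in [set pickle p | p in [set: nat * nat]]) G j)%E.
  rewrite [RHS]esum_mkcond; apply: eq_esum => j _.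
  case: ifPn => // /negP nj; rewrite /G; case E: (pickle_inv j) => [p|//].
  exfalso; apply: nj; rewrite inE; exists p => //.
  by have := @pickle_invK (nat * nat)%type j; rewrite E.
rewrite esum_image; last by move=> p q _ _; apply: (pcan_inj pickleK_inv).
transitivity (\esum_(p in [set: nat] `*`` (fun=> [set: nat])) v p.1 p.2)%E.
  rewrite (_ : [set: nat] `*`` _ = [set: nat * nat]); last by apply/seteqP; split.
  by apply: eq_esum => p _; rewrite /G pickleK_inv.
by rewrite -esum_esum //; apply: eq_esum => k _; rewrite nneseries_esumT.
Qed.

Lemma nneseries_geometric_quarter (R : realType) (e : R) :
  (\sum_(k <oo) (e / (2 ^ (k + 2))%:R)%:E)%E = (e / 2)%:E.
Proof.
by have := @cvg_geometric_eseries_half R e 1; rewrite expr1 => /cvg_lim ->.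
Qed.

Section NullSets.
Variables (R : realType) (n : nat).
Local Notation pt := (n.-tuple R).

Definition box_cover (A : set pt) (ab : (nat -> pt) * (nat -> pt)) :=
  A `<=` \bigcup_k box (ab.1 k) (ab.2 k).

Lemma vol_ge0 (a b : pt) : 0 <= vol a b.
Proof. by apply: prodr_ge0 => i _; rewrite le_max lexx. Qed.

Lemma sum_vol_ge0 (ab : (nat -> pt) * (nat -> pt)) :
  (0 <= \sum_(k <oo) (vol (ab.1 k) (ab.2 k))%:E)%E.
Proof. by apply: nneseries_ge0 => k _ _; rewrite lee_fin vol_ge0. Qed.

Lemma vol_flat (a b : pt) (i : 'I_n) : tnth b i <= tnth a i -> vol a b = 0.
Proof.
move=> ba; rewrite /vol (bigD1 i) //= (_ : Num.max _ _ = 0) ?mul0r //.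
by apply/max_idPl; rewrite subr_le0.
Qed.

Lemma leb_outer_ge0 (A : set pt) : (0 <= leb_outer A)%E.
Proof. by apply/ereal_infP => _ [ab _ <-]; apply: sum_vol_ge0. Qed.

Lemma nullP (A : set pt) : null A <->
  forall e : R, 0 < e -> exists ab, box_cover A ab /\
    (\sum_(k <oo) (vol (ab.1 k) (ab.2 k))%:E < e%:E)%E.
Proof.
split=> [nA e e0|small_cov].
  have : (leb_outer A < e%:E)%E by rewrite nA lte_fin.
  by move=> /ereal_inf_lt [_ [ab cov <-] lt]; exists ab.
apply/eqP; rewrite eq_le leb_outer_ge0 andbT.
apply/lee_addgt0Pr => e e0; rewrite add0e.
have [ab [cov lt]] := small_cov e e0.
by apply: le_trans (ltW lt); apply: ereal_inf_lbound; exists ab.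
Qed.

Lemma null_sub (A B : set pt) : A `<=` B -> null B -> null A.
Proof.
move=> AB /nullP nB; apply/nullP => e e0.
by have [ab [cov lt]] := nB e e0; exists ab; split => // y /AB /cov.
Qed.

Hypothesis n_gt0 : (0 < n)%N.

Let flat_pt : pt := [tuple 0 | _ < n].

Let vol_flat_pt : vol flat_pt flat_pt = 0.
Proof. by rewrite (@vol_flat _ _ (Ordinal n_gt0)) // !tnth_mktuple. Qed.

Lemma null0 : null (@set0 pt).
Proof.
apply/nullP => e e0; exists (fun=> flat_pt, fun=> flat_pt); split => //.
by rewrite eseries0 ?lte_fin // => k _ _; rewrite vol_flat_pt.
Qed.

(* the k-th set is covered up to e/2^(k+2); the covers are merged along pickle *)
Lemma null_bigcup (F : nat -> set pt) : (forall k, null (F k)) -> null (\bigcup_k F k).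
Proof.
move=> nF; apply/nullP => e e0.
have cov k : exists ab, box_cover (F k) ab /\
    (\sum_(i <oo) (vol (ab.1 i) (ab.2 i))%:E < (e / (2 ^ (k + 2))%:R)%:E)%E.
  by apply: (nullP (F k)).1 (nF k) _ _; rewrite divr_gt0 // ltr0n expn_gt0.
have [ab ab_cov] := choice cov.
pose g j := if @pickle_inv (nat * nat)%type j is Some p
  then ((ab p.1).1 p.2, (ab p.1).2 p.2) else (flat_pt, flat_pt).
exists (fun j => (g j).1, fun j => (g j).2); split.
  move=> y [k _ /(ab_cov k).1 [i _ yi]]; exists (pickle (k, i)) => //.
  by rewrite /= /g pickleK_inv.
rewrite (eq_eseriesr (g := (fun j => if @pickle_inv (nat * nat)%type j is Some p
   then (vol ((ab p.1).1 p.2) ((ab p.1).2 p.2))%:E else 0)%E)); last first.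
  by move=> j _; rewrite /= /g; case: pickle_inv => //=; rewrite vol_flat_pt.
rewrite (@nneseries_pickle _ (fun k i => (vol ((ab k).1 i) ((ab k).2 i))%:E)); last first.
  by move=> k i; rewrite lee_fin vol_ge0.
apply: (@le_lt_trans _ _ (\sum_(k <oo) (e / (2 ^ (k + 2))%:R)%:E)%E).
  apply: lee_nneseries => [k _ _|k _]; last exact: ltW (ab_cov k).2.
  by apply: nneseries_ge0 => i _ _; rewrite lee_fin vol_ge0.
by rewrite nneseries_geometric_quarter lte_fin ltr_pdivrMr // ltr_pMr // ltr1n.
Qed.

Lemma null_setU (A B : set pt) : null A -> null B -> null (A `|` B).
Proof.
move=> nA nB; apply: (@null_sub _ (\bigcup_k (if k is 0%N then A else B))).
  by move=> y [Ay|By]; [exists 0%N | exists 1%N].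
by apply: null_bigcup => -[|k].
Qed.

End NullSets.

Lemma lte_mul_small (R : realType) (V e : R) (S : \bar R) : 0 <= V -> (0 <= S)%E ->
  (S < (e / (V + 1))%:E)%E -> (V%:E * S < e%:E)%E.
Proof.
case: S => [s| |] //= V0; rewrite !lte_fin lee_fin => s0 lt.
have V1 : 0 < V + 1 by lra.
apply: (@le_lt_trans _ _ (V * (e / (V + 1)))); first by rewrite ler_wpM2l // ltW.
have e0 : 0 < e by move: (le_lt_trans s0 lt); rewrite pmulr_lgt0 // invr_gt0.
by rewrite mulrA ltr_pdivrMr //; nra.
Qed.

Section NullProduct.
Variable R : realType.
Local Notation pt k := (k.-tuple R).

Definition cst_pt k (c : R) : pt k := [tuple c | _ < k].

Lemma box_cat n m (a b y : pt n) (a' b' y' : pt m) : box a b y -> box a' b' y' ->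
  box (cat_tuple a a') (cat_tuple b b') (cat_tuple y y').
Proof.
move=> aby aby' i; rewrite -(splitK i); case: (fintype.split i) => j /=.
  by rewrite !tnth_lshift.
by rewrite !tnth_rshift.
Qed.

Lemma vol_cat n m (a b : pt n) (a' b' : pt m) :
  vol (cat_tuple a a') (cat_tuple b b') = vol a b * vol a' b'.
Proof.
rewrite /vol big_split_ord /=; congr (_ * _); apply: eq_bigr => i _.
  by rewrite !tnth_lshift.
by rewrite !tnth_rshift.
Qed.

Lemma in_cube m (x : pt m) : exists k : nat, box (cst_pt m (- k%:R)) (cst_pt m k%:R) x.
Proof.
exists (Num.trunc (\sum_j `|tnth x j|)).+1 => i.
rewrite !tnth_mktuple -ler_norml.
have xi : `|tnth x i| <= \sum_j `|tnth x j| by rewrite (bigD1 i) //= lerDl sumr_ge0.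
by apply: le_trans xi (ltW (truncnS_gt _)).
Qed.

Variables (n m : nat) (c : R).
Let cube := box (cst_pt m (- c)) (cst_pt m c).
Let Vc := vol (cst_pt m (- c)) (cst_pt m c).

Lemma null_catl (N : set (pt n)) : null N ->
  null [set cat_tuple y x | y in N & x in cube].
Proof.
move=> /nullP nN; apply/nullP => e e0.
have [ab [cov lt]] := nN (e / (Vc + 1)) (divr_gt0 e0 (ltr_wpDl (vol_ge0 _ _) ltr01)).
exists (fun k => cat_tuple (ab.1 k) (cst_pt m (- c)),
        fun k => cat_tuple (ab.2 k) (cst_pt m c)); split.
  move=> _ [y /cov [k _ yk] [x cx <-]].
  by exists k => //; apply: box_cat.
under eq_eseriesr do rewrite vol_cat EFinM muleC.
rewrite nneseriesZl => [|k _]; last by rewrite lee_fin vol_ge0.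
by apply: lte_mul_small => //; [exact: vol_ge0 | exact: sum_vol_ge0].
Qed.

Lemma null_catr (N : set (pt n)) : null N ->
  null [set cat_tuple x y | x in cube & y in N].
Proof.
move=> /nullP nN; apply/nullP => e e0.
have [ab [cov lt]] := nN (e / (Vc + 1)) (divr_gt0 e0 (ltr_wpDl (vol_ge0 _ _) ltr01)).
exists (fun k => cat_tuple (cst_pt m (- c)) (ab.1 k),
        fun k => cat_tuple (cst_pt m c) (ab.2 k)); split.
  move=> _ [x cx [y /cov [k _ yk] <-]].
  by exists k => //; apply: box_cat.
under eq_eseriesr do rewrite vol_cat EFinM.
rewrite nneseriesZl => [|k _]; last by rewrite lee_fin vol_ge0.
by apply: lte_mul_small => //; [exact: vol_ge0 | exact: sum_vol_ge0].
Qed.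

End NullProduct.

Lemma null2_or (R : realType) (n : nat) (N : set (n.-tuple R)) : (0 < n)%N -> null N ->
  null2 [set p : n.-tuple R * n.-tuple R | N p.1 \/ N p.2].
Proof.
move=> n0 nN; have nn0 : (0 < n + n)%N by rewrite addn_gt0 n0.
apply: (@null_sub _ _ _ (\bigcup_(k : nat)
  ([set cat_tuple y x | y in N & x in box (cst_pt n (- k%:R)) (cst_pt n k%:R)] `|`
   [set cat_tuple x y | x in box (cst_pt n (- k%:R)) (cst_pt n k%:R) & y in N]))).
  move=> _ [[y x] /= [Ny|Nx] <-].
    by have [k xk] := in_cube x; exists k => //; left; exists y => //; exists x.
  by have [k yk] := in_cube y; exists k => //; right; exists y => //; exists x.
apply: null_bigcup => // k; apply: null_setU => //.
  exact: null_catl.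
exact: null_catr.
Qed.

Section EssSup.
Variables (R : realType) (n : nat) (Om : set (n.-tuple R)).
Local Notation pt := (n.-tuple R).
Implicit Types f g : pt -> pt.

Definition linf_exc f := Om `&` [set x | (linf Om f < (enorm (f x))%:E)%E].

Lemma linf_lt_null f (r : R) : (linf Om f < r%:E)%E ->
  null (Om `&` [set x | r < enorm (f x)]).
Proof.
move=> /ereal_inf_lt [_ [M nM <-]]; rewrite lte_fin => Mr.
by apply: (null_sub _ nM) => x [Ox /= rx]; split => //; apply: lt_trans rx.
Qed.

Lemma linf_le f (M : R) (N : set pt) : null N ->
  (forall x, Om x -> ~ N x -> enorm (f x) <= M) -> (linf Om f <= M%:E)%E.
Proof.
move=> nN fM; apply: ereal_inf_lbound; exists M => //.
apply: (null_sub _ nN) => x [Ox /= Mx]; apply/not_notP => Nx.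
by have := fM x Ox Nx; rewrite leNgt Mx.
Qed.

Lemma linf_ge0 f : ~ null Om -> (0 <= linf Om f)%E.
Proof.
move=> nOm; apply/ereal_infP => _ [M nM <-]; rewrite lee_fin leNgt.
apply/negP => M0; apply: nOm; apply: (null_sub _ nM) => x Ox; split => //=.
exact: lt_le_trans M0 (enorm_ge0 _).
Qed.

Lemma linf_excP f x : Om x -> ~ linf_exc f x -> ((enorm (f x))%:E <= linf Om f)%E.
Proof. by move=> Ox fx; rewrite leNgt; apply/negP => lt; apply: fx. Qed.

Lemma linf_vsubC f g :
  linf Om (fun x => vsub (f x) (g x)) = linf Om (fun x => vsub (g x) (f x)).
Proof.
rewrite /linf; congr (ereal_inf [set _%:E | _ in _]); apply: funext => M.
by congr (null (Om `&` _)); apply/seteqP; split => x /=; rewrite enorm_vsubC.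
Qed.

Hypothesis n_gt0 : (0 < n)%N.

Lemma null_linf_exc f : null (linf_exc f).
Proof.
rewrite /linf_exc; case E: (linf Om f) => [l| |].
- apply: (@null_sub _ _ _ (\bigcup_k (Om `&` [set x | l + k.+1%:R^-1 < enorm (f x)]))).
    move=> x [Ox /=]; rewrite lte_fin => lx.
    exists (Num.trunc ((enorm (f x) - l)^-1)) => //; split => //=.
    rewrite -ltrBrDl -[ltRHS]invrK ltf_pV2 ?posrE ?invr_gt0 ?subr_gt0 //.
    exact: truncnS_gt.
  apply: null_bigcup => // k; apply: linf_lt_null.
  by rewrite E lte_fin ltrDl invr_gt0.
- by apply: (null_sub _ (null0 R n_gt0)) => x [_ /=]; rewrite ltNge leey.
- apply: (null_sub _ (@linf_lt_null f (-1) _)); last by rewrite E ltNye.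
  by move=> x [Ox _]; split => //=; apply: lt_le_trans (enorm_ge0 _).
Qed.

Lemma linf_vsub_triangle f g h : ~ null Om ->
  (linf Om (fun x => vsub (f x) (h x)) <=
   linf Om (fun x => vsub (f x) (g x)) + linf Om (fun x => vsub (g x) (h x)))%E.
Proof.
move=> nOm.
have := linf_ge0 (fun x => vsub (f x) (g x)) nOm.
have := linf_ge0 (fun x => vsub (g x) (h x)) nOm.
have := @linf_excP (fun x => vsub (f x) (g x)).
have := @linf_excP (fun x => vsub (g x) (h x)).
have N1 := null_linf_exc (fun x => vsub (f x) (g x)).
have N2 := null_linf_exc (fun x => vsub (g x) (h x)).
case: (linf Om (fun x => vsub (f x) (g x))) => [l1| |] //;
  case: (linf Om (fun x => vsub (g x) (h x))) => [l2| |] //; rewrite ?leey //.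
move=> fg gh _ _; rewrite -EFinD; apply: linf_le (null_setU n_gt0 N1 N2) _.
move=> x Ox /not_orP [x1 x2].
apply: le_trans (enorm_vsub_triangle _ (g x) _) _.
by apply: lerD; rewrite -lee_fin; [apply: gh | apply: fg].
Qed.

Definition linf_exc_all (I : countType) (f : I -> pt -> pt) : set pt :=
  \bigcup_k if @pickle_inv I k is Some i then linf_exc (f i) else set0.

Lemma null_linf_exc_all (I : countType) (f : I -> pt -> pt) : null (linf_exc_all f).
Proof.
apply: null_bigcup => // k; case: pickle_inv => [i|]; last exact: null0.
exact: null_linf_exc.
Qed.

Lemma linf_exc_allP (I : countType) (f : I -> pt -> pt) x :
  ~ linf_exc_all f x -> forall i, ~ linf_exc (f i) x.
Proof. by move=> fx i xi; apply: fx; exists (pickle i) => //; rewrite pickleK_inv. Qed.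

End EssSup.

Lemma ler_strain_dist (R : realType) n (y x : n.-tuple R) (v1 v2 : n.-tuple R -> n.-tuple R) :
  `|strain y x v1 - strain y x v2| <=
  (enorm (vsub (v1 y) (v2 y)) + enorm (vsub (v1 x) (v2 x))) / enorm (vsub y x).
Proof.
rewrite /strain -mulrBl -dotBl; set h := vsub y x.
have [h0|hn0] := eqVneq (enorm h) 0; first by rewrite h0 invr0 !mulr0 normr0.
have hp : 0 < enorm h by rewrite lt_def hn0 enorm_ge0.
rewrite dotZr !normrM normfV (gtr0_norm hp).
apply: ler_wpM2r; first by rewrite invr_ge0 enorm_ge0.
rewrite ler_pdivrMl // mulrC; apply: le_trans (ler_norm_dot _ _) _.
apply: ler_wpM2r; first exact: enorm_ge0.
have -> : vsub (vsub (v1 y) (v1 x)) (vsub (v2 y) (v2 x)) =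
          vadd (vsub (v1 y) (v2 y)) (vsub (v2 x) (v1 x)).
  by apply: eq_from_tnth => i; rewrite tnth_vadd !tnth_vsub; ring.
by rewrite (enorm_vsubC (v1 x)) enorm_vaddle.
Qed.

Lemma ler_strain_dist_linf (R : realType) n (Om : set (n.-tuple R))
    (v1 v2 : n.-tuple R -> n.-tuple R) (y x : n.-tuple R) (M : R) :
  Om y -> Om x -> ~ linf_exc Om (fun z => vsub (v1 z) (v2 z)) y ->
  ~ linf_exc Om (fun z => vsub (v1 z) (v2 z)) x ->
  (linf Om (fun z => vsub (v1 z) (v2 z)) <= M%:E)%E ->
  `|strain y x v1 - strain y x v2| <= (M + M) / enorm (vsub y x).
Proof.
move=> Oy Ox ny nx vM; apply: le_trans (ler_strain_dist _ _ _ _) _.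
apply: ler_wpM2r; first by rewrite invr_ge0 enorm_ge0.
by apply: lerD; rewrite -lee_fin; apply: le_trans (linf_excP _ _) vM.
Qed.

Lemma ler_wpdivr2l (R : realFieldType) (x p q : R) :
  0 <= x -> 0 < p -> p <= q -> x / q <= x / p.
Proof. by move=> x0 p0 pq; rewrite ler_wpM2l // lef_pV2 // posrE (lt_le_trans p0). Qed.

Section PhaseLipschitz.
Variables (R : realType) (mu rL K : R) (gp : R -> R).
Hypotheses (mu_gt0 : 0 < mu) (rL_gt0 : 0 < rL) (K_ge0 : 0 <= K)
  (gp_rL : gp rL = mu * rL)
  (gp_bound : forall r, rL <= r -> 0 <= gp r /\ gp r <= mu * r)
  (gp_lip : forall r s, `|gp r - gp s| <= K * `|r - s|).

Definition phase_lip_const := K / (mu * rL) + rL^-1.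

Lemma phase_lip_const_gt0 : 0 < phase_lip_const.
Proof. by rewrite ltr_wpDl ?invr_gt0 // divr_ge0 // mulr_ge0 // ltW. Qed.

Lemma gp_ratio_lipschitz a b : rL <= a -> rL <= b ->
  `|gp a / (mu * a) - gp b / (mu * b)| <= phase_lip_const * `|a - b|.
Proof.
move=> ra rb.
have a0 : 0 < a by apply: lt_le_trans ra.
have b0 : 0 < b by apply: lt_le_trans rb.
have -> : gp a / (mu * a) - gp b / (mu * b) =
   (gp a - gp b) / (mu * a) + gp b * (b - a) / (mu * a * b).
  by field; rewrite ?gt_eqF ?mulr_gt0.
apply: le_trans (ler_normD _ _) _; rewrite /phase_lip_const [_ * `|a - b|]mulrDl.
apply: lerD.
  rewrite normrM normfV (gtr0_norm (mulr_gt0 mu_gt0 a0)).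
  apply: (@le_trans _ _ (K * `|a - b| / (mu * a))).
    by apply: ler_wpM2r; [rewrite invr_ge0 ltW // mulr_gt0 | exact: gp_lip].
  rewrite mulrAC; apply: ler_wpM2r => //; apply: ler_wpdivr2l; rewrite ?mulr_gt0 //.
  by rewrite ler_pM2l.
have [g0 gb] := gp_bound rb.
rewrite !normrM normfV !normrM (ger0_norm g0) (gtr0_norm mu_gt0) (gtr0_norm a0).
rewrite (gtr0_norm b0) (distrC b a).
apply: (@le_trans _ _ (mu * b * `|a - b| / (mu * a * b))).
  by apply: ler_wpM2r; [rewrite invr_ge0 ltW // !mulr_gt0 | apply: ler_wpM2r].
have -> : mu * b * `|a - b| / (mu * a * b) = `|a - b| / a by field; rewrite ?gt_eqF.
by rewrite [leRHS]mulrC; apply: ler_wpdivr2l.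
Qed.

Lemma phase_lipschitz a b :
  `|phase mu rL gp a%:E - phase mu rL gp b%:E| <= phase_lip_const * `|a - b|.
Proof.
wlog ab : a b / a <= b.
  by move=> le_case; have [/le_case|/ltW/le_case] := leP a b; rewrite // distrC (distrC a).
have L0 := phase_lip_const_gt0.
rewrite /phase; case: ifPn => ar; case: ifPn => br.
- by rewrite subrr normr0 mulr_ge0 // ltW.
- have -> : (1 : R) = gp rL / (mu * rL) by rewrite gp_rL divff // gt_eqF // mulr_gt0.
  rewrite -ltNge in br.
  apply: le_trans (gp_ratio_lipschitz (lexx _) (ltW br)) _.
  apply: ler_wpM2l; first exact: ltW.
  rewrite distrC (distrC a) !ger0_norm ?subr_ge0 //; lra.
- by rewrite -ltNge in ar; lra.
- by rewrite -!ltNge in ar br; apply: gp_ratio_lipschitz; apply: ltW.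
Qed.

End PhaseLipschitz.

Lemma envelope_phase_lipschitz (R : realType) (mu rL rC rF : R) (gp : R -> R) :
  0 < mu -> envelope mu rL rC rF gp -> exists2 L : R, 0 < L &
    forall a b, `|phase mu rL gp a%:E - phase mu rL gp b%:E| <= L * `|a - b|.
Proof.
move=> mu0 [[rL0 _] [gp_lin [_ [gp_bound [_ [_ [K gp_lip]]]]]]].
pose K' := Num.max K 0.
have K'0 : 0 <= K' by rewrite le_max lexx orbT.
have gp_lip' r s : `|gp r - gp s| <= K' * `|r - s|.
  by apply: le_trans (gp_lip r s) _; rewrite ler_wpM2r // le_max lexx.
exists (phase_lip_const mu rL K'); first exact: phase_lip_const_gt0.
by apply: phase_lipschitz => //; apply: gp_lin.
Qed.

Lemma phase_scale_dist (R : realType) (mu rL L k c : R) (gp : R -> R) (X Y : \bar R) :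
  (forall a b, `|phase mu rL gp a%:E - phase mu rL gp b%:E| <= L * `|a - b|) ->
  0 <= L -> 0 <= k -> 0 <= c -> X != -oo%E -> Y != -oo%E ->
  (X <= Y + c%:E)%E -> (Y <= X + c%:E)%E ->
  `|phase mu rL gp (k%:E * X) - phase mu rL gp (k%:E * Y)| <= L * (k * c).
Proof.
move=> phase_lip L0 k0 c0; have [->|k_neq0] := eqVneq k 0.
  by rewrite !mul0e subrr normr0 mul0r mulr0.
have {k0 k_neq0}k0 : 0 < k by rewrite lt_def k_neq0.
case: X => [x| |] //; case: Y => [y| |] // _ _.
- rewrite -!EFinD !lee_fin -!EFinM => xy yx.
  apply: le_trans (phase_lip _ _) _; apply: ler_wpM2l => //.
  rewrite -mulrBr normrM gtr0_norm //; apply: ler_wpM2l; first exact: ltW.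
  by rewrite ler_norml; lra.
- by rewrite !gt0_muley ?lte_fin // subrr normr0 !mulr_ge0 // ltW.
Qed.

Definition qsup (R : realType) (F : rat -> R) (t : R) : \bar R :=
  ereal_sup [set (F q)%:E | q in [set q : rat | 0 <= (ratr q : R) <= t]].

Lemma exists_rat_near (R : realType) (a t0 d : R) : 0 <= a -> `|a - t0| < d ->
  exists q : rat, 0 <= (ratr q : R) <= a /\ `|ratr q - t0| < d.
Proof.
move=> a0 ad; have [a_eq0|a_neq0] := eqVneq a 0.
  by exists 0; rewrite rmorph0 lexx a0 -a_eq0.
have : Num.max 0 (t0 - d) < a.
  by rewrite gt_max lt_def a_neq0 a0 /=; move: ad; rewrite ltr_norml; lra.
move=> /rat_in_itvoo [q]; rewrite in_itv /= gt_max => /andP [/andP [q0 qd] qa].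
exists q; rewrite !ltW //=; move: ad; rewrite !ltr_norml; lra.
Qed.

Section RationalSup.
Variables (R : realType) (F : rat -> R).

Lemma qsup_ub (q : rat) (t : R) : 0 <= (ratr q : R) <= t -> ((F q)%:E <= qsup F t)%E.
Proof. by move=> qt; apply: ereal_sup_ubound; exists q. Qed.

Lemma qsup_neqNy (t : R) : 0 <= t -> qsup F t != -oo%E.
Proof.
move=> t0; apply/eqP => E; have := @qsup_ub 0 t; rewrite rmorph0 lexx t0 E.
by rewrite leeNy_eq => /(_ isT).
Qed.

Lemma le_qsup (a b : R) : a <= b -> (qsup F a <= qsup F b)%E.
Proof.
move=> ab; apply: ereal_sup_le => _ [q /andP [q0 qa] <-]; exists q => //=.
by rewrite q0 (le_trans qa ab).
Qed.

Lemma qsup_leD (G : rat -> R) (c t : R) :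
  (forall q, 0 <= (ratr q : R) <= t -> F q <= G q + c) ->
  (qsup F t <= qsup G t + c%:E)%E.
Proof.
move=> FG; apply/ereal_supP => _ [q qt <-].
apply: (@le_trans _ _ ((G q)%:E + c%:E)%E); first by rewrite -EFinD lee_fin FG.
by apply: leeD2r; apply: ereal_sup_ubound; exists q.
Qed.

Variables (T t0 d e : R).
Hypotheses (d_gt0 : 0 < d) (e_gt0 : 0 < e).
Hypothesis F_osc : forall q s : rat,
  0 <= (ratr q : R) <= T -> 0 <= (ratr s : R) <= T ->
  `|ratr q - t0| < d -> `|ratr s - t0| < d -> `|F q - F s| <= e.

(* times in (a, b] are compared with one rational time in [0, a] close to t0 *)
Lemma qsup_le_near (a b : R) : 0 <= a -> a <= b -> b <= T ->
  `|a - t0| < d -> `|b - t0| < d -> (qsup F b <= qsup F a + e%:E)%E.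
Proof.
move=> a0 ab bT ad bd; have [r [/andP [r0 ra] rd]] := exists_rat_near a0 ad.
apply/ereal_supP => _ [s /andP [s0 sb] <-].
have [s_le_a|a_lt_s] := leP (ratr s) a.
  apply: (@le_trans _ _ (qsup F a)); first by apply: qsup_ub; rewrite s0.
  by rewrite leeDl // lee_fin ltW.
apply: (@le_trans _ _ ((F r)%:E + e%:E)%E); last first.
  by apply: leeD2r; apply: qsup_ub; rewrite r0.
rewrite -EFinD lee_fin.
have : `|F s - F r| <= e.
  apply: F_osc => //; rewrite ?s0 ?r0 ?(le_trans sb bT) ?(le_trans ra (le_trans ab bT)) //.
  by move: ad bd; rewrite !ltr_norml; lra.
by rewrite ler_norml; lra.
Qed.

Lemma qsup_near (t : R) : 0 <= t0 -> t0 <= T -> 0 <= t -> t <= T -> `|t - t0| < d ->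
  (qsup F t <= qsup F t0 + e%:E)%E /\ (qsup F t0 <= qsup F t + e%:E)%E.
Proof.
move=> t00 t0T t_ge0 tT td; have t0d : `|t0 - t0| < d by rewrite subrr normr0.
have leD x y : (x <= y)%E -> (x <= y + e%:E)%E.
  by move=> xy; apply: le_trans xy _; rewrite leeDl // lee_fin ltW.
have [tt0|t0t] := leP t t0.
  by split; [apply: leD; apply: le_qsup | apply: qsup_le_near].
by split; [apply: qsup_le_near; rewrite // ltW | apply: leD; apply: le_qsup; apply: ltW].
Qed.

End RationalSup.

Lemma within_continuous_itv_eps (R : realType) (T : R) (f : R -> R) :
  (forall t0, 0 <= t0 <= T -> forall e, 0 < e -> exists2 d, 0 < d &
     forall t, 0 <= t <= T -> `|t - t0| < d -> `|f t - f t0| <= e) ->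
  {within `[0, T], continuous f}.
Proof.
move=> f_cont; apply/subspace_continuousP => x; rewrite /= in_itv => x0T.
apply/cvgrPdist_le => e e0; have [d d0 fd] := f_cont x x0T e e0.
rewrite near_withinE; apply/nbhs_ballP; exists d => //= t xt.
by rewrite /= in_itv distrC => /fd; apply; rewrite distrC.
Qed.

Lemma lipschitz_continuous (R : realType) (f : R -> R) (L : R) :
  (forall a b, `|f a - f b| <= L * `|a - b|) -> continuous f.
Proof.
move=> f_lip x; apply/cvgrPdist_le => e e0.
pose L' := Num.max L 1.
have L'0 : 0 < L' by rewrite lt_max ltr01 orbT.
apply/nbhs_ballP; exists (e / L') => /=; first by rewrite divr_gt0.
move=> y; rewrite /ball /= => xy; apply: le_trans (f_lip x y) _.
apply: (@le_trans _ _ (L' * `|x - y|)); first by apply: ler_wpM2r; rewrite ?le_max ?lexx.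
by rewrite -ler_pdivlMl // mulrC ltW.
Qed.

Lemma measurable_inv (R : realType) : measurable_fun [set: R] (@GRing.inv R).
Proof.
rewrite -(setUv [set 0]); apply/measurable_funU => //; first exact: measurableC.
split; first exact: measurable_fun_set1.
apply: open_continuous_measurable_fun.
  by rewrite openC; apply: compact_closed; [exact: Rhausdorff | exact: compact_set1].
by move=> x; rewrite inE /= => /eqP x0; apply: inv_continuous.
Qed.

Lemma measurable_setXsq d (T : measurableType d) (A : set T) :
  measurable (A `*` A) -> measurable A.
Proof.
move=> mAA; have [->//|/set0P [a Aa]] := eqVneq A set0.
rewrite (_ : A = xsection (A `*` A) a); first exact: measurable_xsection.
by apply/seteqP; split => x; rewrite /xsection /= inE => //= -[].
Qed.

Section Measurability.
Variables (R : realType) (n : nat) (Om : set (n.-tuple R)).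
Local Notation pt := (n.-tuple R).

Let measurable_coord_diff (D : set (pt * pt)) i :
  measurable_fun D (fun p : pt * pt => tnth p.1 i - tnth p.2 i).
Proof.
apply: measurable_funB; apply: measurableT_comp (measurable_tnth i) (measurable_funTS _).
  exact: measurable_fst.
exact: measurable_snd.
Qed.

Lemma measurable_enorm_vsub (D : set (pt * pt)) :
  measurable_fun D (fun p : pt * pt => enorm (vsub p.1 p.2)).
Proof.
apply: measurableT_comp (continuous_measurable_fun (@sqrt_continuous R)) _.
have mi i : measurable_fun D (fun p : pt * pt => tnth (vsub p.1 p.2) i).
  by under eq_fun do rewrite tnth_vsub; apply: measurable_coord_diff.
by apply: measurable_sum => i; apply: measurable_funM; apply: mi.
Qed.

Lemma strainE (y x : pt) (v : pt -> pt) : strain y x v =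
  (\sum_i (tnth (v y) i - tnth (v x) i) * (tnth y i - tnth x i)) *
  (\sum_i (tnth y i - tnth x i) * (tnth y i - tnth x i))^-1.
Proof.
rewrite /strain dotZr -mulrA mulrC -mulrA -invfM -expr2 enorm_sqr /dot.
by congr (_ * _^-1); apply: eq_bigr => i _; rewrite !tnth_vsub.
Qed.

Hypothesis mOm : measurable Om.

Lemma measurable_strain (v : pt -> pt) : measurable_fun Om v ->
  measurable_fun (Om `*` Om) (fun p => strain p.1 p.2 v).
Proof.
move=> mv.
have mv_comp (f : pt * pt -> pt) : measurable_fun (Om `*` Om) f ->
    f @` (Om `*` Om) `<=` Om -> measurable_fun (Om `*` Om) (fun p => v (f p)).
  by move=> mf fOm; exact: (measurable_comp mOm fOm mv mf).
have mv1 i : measurable_fun (Om `*` Om) (fun p => tnth (v p.1) i).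
  apply: measurableT_comp (measurable_tnth i) (mv_comp _ _ _) => //.
  - exact: measurable_funTS measurable_fst.
  - by move=> _ [p [? ?] <-].
have mv2 i : measurable_fun (Om `*` Om) (fun p => tnth (v p.2) i).
  apply: measurableT_comp (measurable_tnth i) (mv_comp _ _ _) => //.
  - exact: measurable_funTS measurable_snd.
  - by move=> _ [p [? ?] <-].
rewrite (_ : (fun p => _) = (fun p : pt * pt =>
  (\sum_i (tnth (v p.1) i - tnth (v p.2) i) * (tnth p.1 i - tnth p.2 i)) *
  (\sum_i (tnth p.1 i - tnth p.2 i) * (tnth p.1 i - tnth p.2 i))^-1)); last first.
  by apply: funext => p; rewrite strainE.
have mv_diff i : measurable_fun (Om `*` Om) (fun p => tnth (v p.1) i - tnth (v p.2) i).
  exact: measurable_funB.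
apply: measurable_funM; last apply: measurableT_comp (@measurable_inv R) _.
  apply: measurable_sum => i.
  by apply: measurable_funM; [exact: mv_diff | exact: measurable_coord_diff].
by apply: measurable_sum => i; apply: measurable_funM; exact: measurable_coord_diff.
Qed.

Lemma measurable_mstrain (u : R -> pt -> pt) (t : R) :
  (forall q : rat, 0 <= (ratr q : R) <= t -> measurable_fun Om (u (ratr q))) ->
  measurable_fun (Om `*` Om) (fun p => mstrain u t p.1 p.2).
Proof.
move=> u_meas.
pose f k : pt * pt -> \bar R := if @pickle_inv rat k is Some q then
  if 0 <= (ratr q : R) <= t then (fun p => (strain p.1 p.2 (u (ratr q)))%:E)
  else (fun=> -oo%E) else (fun=> -oo%E).
have mf k : measurable_fun (Om `*` Om) (f k).
  rewrite /f; case: pickle_inv => [q|]; last exact: measurable_cst.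
  case: ifPn => qt; last exact: measurable_cst.
  by apply/measurable_EFinP; apply: measurable_strain; apply: u_meas.
rewrite (_ : (fun p => _) = (fun p => esups (fun k => f k p) 0%N)).
  exact: measurable_fun_esups.
apply: funext => p; apply/eqP; rewrite eq_le; apply/andP; split.
  apply/ereal_supP => _ [q qt <-]; apply: ereal_sup_ubound.
  by exists (pickle q) => //; rewrite /f pickleK_inv; move: qt => /= ->.
apply/ereal_supP => _ [k _ <-]; rewrite /f.
case: pickle_inv => [q|]; last by rewrite leNye.
by case: ifPn => qt; [apply: ereal_sup_ubound; exists q | rewrite leNye].
Qed.

End Measurability.

Lemma measurable_gamma (R : realType) n (Om : set (n.-tuple R))
    (u : R -> n.-tuple R -> n.-tuple R) (t Lc mu rL : R) (gp : R -> R) :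
  0 <= rL -> continuous (fun r => phase mu rL gp r%:E) ->
  (forall q : rat, 0 <= (ratr q : R) <= t -> measurable_fun Om (u (ratr q))) ->
  measurable_fun (Om `*` Om) (fun p => gamma Lc mu rL gp u p.1 p.2 t).
Proof.
move=> rL0 phase_cont u_meas mOO; have mOm := measurable_setXsq mOO; move: mOO.
have mr : measurable_fun (Om `*` Om) (fun p => rstar Lc u t p.1 p.2).
  apply: emeasurable_funM; last exact: measurable_mstrain.
  apply/measurable_EFinP.
  apply: measurableT_comp (continuous_measurable_fun (@sqrt_continuous R)) _.
  by apply: measurable_funM; [exact: measurable_enorm_vsub | exact: measurable_cst].
rewrite (_ : (fun p => _) = (fun p => if rstar Lc u t p.1 p.2 == +oo%E then 0
   else phase mu rL gp (fine (rstar Lc u t p.1 p.2))%:E)); last first.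
  apply: funext => p; rewrite /gamma; case: (rstar Lc u t p.1 p.2) => [r| |] //=.
  (* [phase -oo = 1 = phase 0] since [0 <= rL] *)
  by rewrite rL0.
apply: measurable_fun_if => //; [exact: measurableX | exact: measurable_fun_eqe mr _ |].
apply: measurableT_comp (continuous_measurable_fun phase_cont) _.
apply: measurableT_comp (fine_measurable measurableT) _.
by apply: measurable_funS mr; [exact: measurableX | exact: subIsetl].
Qed.

Lemma ae2_of_null (R : realType) n (Om : set (n.-tuple R)) A P : (0 < n)%N ->
  null Om -> A `<=` [set p | Om p.1] -> ae2 A P.
Proof.
move=> n0 nOm AOm; exists [set p | Om p.1 \/ Om p.2]; split.
  exact: null2_or.
by move=> y x /AOm Oy; case; left.
Qed.

Definition linf_continuous (R : realType) n (Om : set (n.-tuple R)) (T : R)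
    (u : R -> n.-tuple R -> n.-tuple R) :=
  forall t, 0 <= t <= T -> forall e : R, 0 < e -> exists del : R, 0 < del /\
    forall s, 0 <= s <= T -> `|s - t| < del ->
      (linf Om (fun x => vsub (u s x) (u t x)) <= e%:E)%E.

Section GammaAE.
Variables (R : realType) (n : nat) (Om : set (n.-tuple R)).
Variables (Lc mu rL L : R) (gp : R -> R).
Hypotheses (n_gt0 : (0 < n)%N) (Lc_gt0 : 0 < Lc) (L_gt0 : 0 < L).
Hypothesis phase_lip :
  forall a b, `|phase mu rL gp a%:E - phase mu rL gp b%:E| <= L * `|a - b|.
Local Notation pt := (n.-tuple R).

Lemma gamma_lipschitz_ae (eps T : R) (u w : R -> pt -> pt) : 0 < eps -> 0 <= T ->
  ae2 [set p | Om p.1 /\ Om p.2 /\ enorm (vsub p.1 p.2) < eps]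
    (fun y x => forall t, 0 <= t <= T ->
       ((`|gamma Lc mu rL gp u y x t - gamma Lc mu rL gp w y x t|)%:E
         <= normCX Om T u w * (2 * L * Num.sqrt (eps / Lc) / enorm (vsub y x))%:E)%E).
Proof.
move=> eps_gt0 T_ge0.
have [nOm|nOm] := pselect (null Om); first by apply: (ae2_of_null _ n_gt0 nOm) => p [].
pose f (q : rat) z := vsub (u (ratr q) z) (w (ratr q) z).
exists [set p | linf_exc_all Om f p.1 \/ linf_exc_all Om f p.2].
split; first exact: null2_or n_gt0 (null_linf_exc_all Om n_gt0 f).
move=> y x [Oy [Ox yx_lt_eps]] /not_orP [ny nx] t /andP [t0 tT].
set D := normCX Om T u w; set h := enorm (vsub y x).
set c := Num.sqrt (h / Lc); set S := Num.sqrt (eps / Lc).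
have DB q : 0 <= (ratr q : R) <= T -> (linf Om (f q) <= D)%E.
  by move=> qT; apply: ereal_sup_ubound; exists (ratr q).
have D0 : (0 <= D)%E by apply: le_trans (linf_ge0 _ nOm) (DB 0 _); rewrite rmorph0 lexx.
have [h0|h_neq0] := eqVneq h 0.
  by rewrite /gamma /rstar -/h h0 mul0r sqrtr0 !mul0e subrr normr0 invr0 mulr0 mule0.
have h_gt0 : 0 < h by rewrite lt_def h_neq0 enorm_ge0.
have S_gt0 : 0 < S by rewrite sqrtr_gt0 divr_gt0.
have C_gt0 : 0 < 2 * L * S / h by rewrite !mulr_gt0 ?invr_gt0.
case ED: D D0 => [D'| |] // D0; last by rewrite gt0_mulye ?lte_fin // leey.
rewrite lee_fin in D0.
have uw_dist q : 0 <= (ratr q : R) <= t ->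
    `|strain y x (u (ratr q)) - strain y x (w (ratr q))| <= (D' + D') / h.
  move=> /andP [q0 qt]; apply: (ler_strain_dist_linf (Om := Om)) => //.
  - exact: (linf_exc_allP (i := q) ny).
  - exact: (linf_exc_allP (i := q) nx).
  - by rewrite -ED; apply: DB; rewrite q0 (le_trans qt tT).
have M_ge0 : 0 <= (D' + D') / h by rewrite divr_ge0 ?addr_ge0 // ltW.
rewrite -EFinM lee_fin /gamma /rstar -/h -/c.
apply: le_trans (phase_scale_dist phase_lip (ltW L_gt0) (sqrtr_ge0 _) M_ge0
  (qsup_neqNy _ t0) (qsup_neqNy _ t0) _ _) _.
- by apply: qsup_leD => q /uw_dist; rewrite ler_norml; lra.
- by apply: qsup_leD => q /uw_dist; rewrite ler_norml; lra.
have cS : c <= S.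
  rewrite ler_sqrt ?divr_ge0 ?(ltW eps_gt0) ?(ltW Lc_gt0) // ler_pM2r ?invr_gt0 //.
  exact: ltW yx_lt_eps.
rewrite (_ : D' * _ = L * (S * ((D' + D') / h))); last by field; rewrite gt_eqF.
by apply: ler_wpM2l; [exact: ltW | exact: ler_wpM2r].
Qed.

Lemma gamma_continuous_ae (T : R) (u : R -> pt -> pt) : linf_continuous Om T u ->
  ae2 (Om `*` Om) (fun y x =>
    {within `[0, T], continuous (fun t => gamma Lc mu rL gp u y x t)}).
Proof.
move=> u_cont.
have [nOm|nOm] := pselect (null Om); first by apply: (ae2_of_null _ n_gt0 nOm) => p [].
pose f (qs : rat * rat) z := vsub (u (ratr qs.1) z) (u (ratr qs.2) z).
exists [set p | linf_exc_all Om f p.1 \/ linf_exc_all Om f p.2].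
split; first exact: null2_or n_gt0 (null_linf_exc_all Om n_gt0 f).
move=> y x [/= Oy Ox] /not_orP [ny nx].
apply: within_continuous_itv_eps => t0 /andP [t00 t0T] e e_gt0.
set h := enorm (vsub y x); set c := Num.sqrt (h / Lc).
set F := fun q : rat => strain y x (u (ratr q)).
have [h0|h_neq0] := eqVneq h 0.
  exists 1 => // t _ _; rewrite /gamma /rstar -/h h0 mul0r sqrtr0 !mul0e subrr normr0.
  exact: ltW.
have h_gt0 : 0 < h by rewrite lt_def h_neq0 enorm_ge0.
have c_gt0 : 0 < c by rewrite sqrtr_gt0 divr_gt0.
set e1 := e / (L * c).
have e1_gt0 : 0 < e1 by rewrite divr_gt0 ?mulr_gt0.
have [del [del_gt0 u_del]] := u_cont t0 (andb_true_intro (conj t00 t0T)) (e1 * h / 4)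
  (divr_gt0 (mulr_gt0 e1_gt0 h_gt0) (ltr0Sn _ 3)).
have F_osc q s : 0 <= (ratr q : R) <= T -> 0 <= (ratr s : R) <= T ->
    `|ratr q - t0| < del -> `|ratr s - t0| < del -> `|F q - F s| <= e1.
  move=> qT sT qd sd.
  have : (linf Om (f (q, s)) <= (e1 * h / 4 + e1 * h / 4)%:E)%E.
    apply: le_trans (linf_vsub_triangle n_gt0 _ (u t0) _ nOm) _.
    rewrite EFinD; apply: leeD; first exact: u_del.
    by rewrite linf_vsubC; apply: u_del.
  move=> fqs; apply: le_trans (ler_strain_dist_linf (v1 := u (ratr q)) (v2 := u (ratr s))
    Oy Ox (linf_exc_allP (i := (q, s)) ny) (linf_exc_allP (i := (q, s)) nx) fqs) _.
  by rewrite ler_pdivrMr // -/h; lra.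
exists del => // t /andP [t_ge0 tT] td.
have [le1 le2] := qsup_near del_gt0 e1_gt0 F_osc t00 t0T t_ge0 tT td.
rewrite /gamma /rstar -/h -/c.
apply: le_trans (phase_scale_dist phase_lip (ltW L_gt0) (ltW c_gt0) (ltW e1_gt0)
  (qsup_neqNy _ t_ge0) (qsup_neqNy _ t00) le1 le2) _.
by have -> : L * (c * e1) = e by rewrite /e1; field; rewrite !gt_eqF.
Qed.

End GammaAE.

Theorem mainTheorem2 (R : realType) (d : nat) (Omega : set (pt R d))
  (eps Lc mu rL rC rF : R) (gp : R -> R) (T : R) :
  (d = 2%N \/ d = 3%N) -> bounded_domain Omega ->
  0 < eps -> 0 < Lc -> 0 < mu -> envelope mu rL rC rF gp -> 0 < T ->
  (forall u : R -> pt R d -> pt R d, inCX Omega T u ->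
     (forall t, 0 <= t <= T ->
        measurable_fun (Omega `*` Omega)
          (fun p : pt R d * pt R d => gamma Lc mu rL gp u p.1 p.2 t)) /\
     ae2 (Omega `*` Omega) (fun y x =>
        {within `[0, T], continuous (fun t => gamma Lc mu rL gp u y x t)})) /\
  (exists C : R, forall u w : R -> pt R d -> pt R d,
     inCX Omega T u -> inCX Omega T w ->
     ae2 [set p | Omega p.1 /\ Omega p.2 /\ enorm (vsub p.1 p.2) < eps]
       (fun y x => forall t, 0 <= t <= T ->
          ((`|gamma Lc mu rL gp u y x t - gamma Lc mu rL gp w y x t|)%:E
            <= normCX Omega T u w * (C / enorm (vsub y x))%:E)%E)).
Proof.
move=> d23 _ eps_gt0 Lc_gt0 mu_gt0 env T_gt0.
have d_gt0 : (0 < d)%N by case: d23 => ->.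
have rL_ge0 : 0 <= rL by case: env => -[/ltW].
have [L L_gt0 phase_lip] := envelope_phase_lipschitz mu_gt0 env.
split=> [u [u_in_X u_cont]|].
  split; last exact: gamma_continuous_ae d_gt0 Lc_gt0 L_gt0 phase_lip _ _ u_cont.
  move=> t /andP [t_ge0 tT].
  apply: measurable_gamma rL_ge0 (lipschitz_continuous phase_lip) _ => q /andP [q0 qt].
  by case: (u_in_X (ratr q)) => //; rewrite q0 (le_trans qt tT).
exists (2 * L * Num.sqrt (eps / Lc)) => u w _ _.
exact: gamma_lipschitz_ae d_gt0 Lc_gt0 L_gt0 phase_lip _ _ _ _ eps_gt0 (ltW T_gt0).
Qed.
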